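(* Every 5-basket is $(2P_3,C_4,C_6,C_7,T_0)$-free and contains an induced 3-pentagon. Moreover, every 5-basket is anticonnected and contains no simplicial and no universal vertices.
   Context: Graphs are finite, simple, nonnull. A graph is $(H_1,\dots,H_m)$-free if it has no induced subgraph isomorphic to any $H_i$. $P_k$, $C_k$ are the path and cycle on $k$ vertices; $2P_3$ is two disjoint copies of $P_3$. $T_0$ is the graph with vertices $p,q,u_0,u_1,u_2,u_3,w_1,w_2,w_3$ and edges $pq,pu_0,pu_2,pu_3,qu_1,qu_2,qu_3,u_0w_1,u_1w_1,u_2w_2,u_3w_3,w_1w_2,w_1w_3,w_2w_3$. The 3-pentagon is the graph on vertices $a,b_1,b_2,b_3,c_1,c_2,c_3$ where $a$ is adjacent to each $b_i$ and to no $c_i$, $\{b_1,b_2,b_3\}$ is stable, $\{c_1,c_2,c_3\}$ is a clique, and $b_ic_j$ is an edge iff $i=j$. A graph is anticonnected if its complement is connected. A vertex is simplicial if its neighbours form a (possibly empty) clique, universal if adjacent to all other vertices. For disjoint vertex sets $X,Y$, $X$ is complete (anticomplete) to $Y$ if every vertex of $X$ is adjacent (nonadjacent) to every vertex of $Y$. A 5-basket is a graph $Q$ whose vertex set partitions into $A,B_1,B_2,B_3,C_1,C_2,C_3,F$ where $A,B_i,C_i$ are nonempty cliques, $F$ is a possibly empty clique, $B_1,B_2,B_3$ are pairwise anticomplete, $C_1,C_2,C_3$ are pairwise complete; there is $i^*\in\{1,2,3\}$ such that $A$ is complete to $(B_1\cup B_2\cup B_3)\setminus B_{i^*}$ and $A$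 can be ordered $a_1,\dots,a_t$ with $N(a_t)\cap B_{i^*}\subseteq\cdots\subseteq N(a_1)\cap B_{i^*}=B_{i^*}$; $A$ is anticomplete to $C_1\cup C_2\cup C_3$; each $B_i$ is complete to $C_i$ and anticomplete to $C_j$ for $j\ne i$; and there is $j^*$ such that $F$ is complete to $V(Q)\setminus(B_{j^*}\cup C_{j^*}\cup F)$ and anticomplete to $B_{j^*}\cup C_{j^*}$. *)

From mathcomp Require Import all_boot.
Set Implicit Arguments. Unset Strict Implicit. Unset Printing Implicit Defensive.

Definition simple_graph (T : finType) (e : rel T) :=
  symmetric e /\ irreflexive e.

Definition has_induced (T U : finType) (e : rel T) (f : rel U) :=
  exists phi : U -> T, injective phi /\ forall x y, f x y = e (phi x) (phi y).

Definition edge_rel (n : nat) (l : seq (nat * nat)) : rel 'I_n :=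
  fun i j => ((nat_of_ord i, nat_of_ord j) \in l) || ((nat_of_ord j, nat_of_ord i) \in l).

Arguments edge_rel : clear implicits.

Definition cycle_rel (k : nat) : rel 'I_k :=
  fun i j => (nat_of_ord j == i.+1 %% k) || (nat_of_ord i == j.+1 %% k).

Arguments cycle_rel : clear implicits.

Definition twoP3 : rel 'I_6 := edge_rel 6 [:: (0,1); (1,2); (3,4); (4,5)].

(* T_0 : p=0, q=1, u0=2, u1=3, u2=4, u3=5, w1=6, w2=7, w3=8. *)
Definition T0 : rel 'I_9 := edge_rel 9
  [:: (0,1); (0,2); (0,4); (0,5); (1,3); (1,4); (1,5);
      (2,6); (3,6); (4,7); (5,8); (6,7); (6,8); (7,8)].

(* 3-pentagon : a=0, b1=1, b2=2, b3=3, c1=4, c2=5, c3=6. *)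
Definition pentagon3 : rel 'I_7 := edge_rel 7
  [:: (0,1); (0,2); (0,3); (4,5); (4,6); (5,6); (1,4); (2,5); (3,6)].

Section Basket.
Variables (T : finType) (e : rel T).

Definition nbhd (v : T) : {set T} := [set u | e v u].

Definition is_clique (X : {set T}) :=
  forall x y, x \in X -> y \in X -> x != y -> e x y.
Definition is_stable (X : {set T}) :=
  forall x y, x \in X -> y \in X -> ~~ e x y.
Definition complete (X Y : {set T}) :=
  forall x y, x \in X -> y \in Y -> e x y.
Definition anticomplete (X Y : {set T}) :=
  forall x y, x \in X -> y \in Y -> ~~ e x y.

Definition anticonnected :=
  forall x y, connect (fun u v => (u != v) && ~~ e u v) x y.

Definition simplicial (v : T) := is_clique (nbhd v).
Definition universal (v : T) := forall u, u != v -> e v u.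

Definition partitions (parts : seq {set T}) :=
  forall v, count (fun S : {set T} => v \in S) parts = 1.

Definition five_basket :=
  exists (A : {set T}) (B C : 'I_3 -> {set T}) (F : {set T}),
    partitions [:: A; B ord0; B (inord 1); B (inord 2);
                   C ord0; C (inord 1); C (inord 2); F] /\
    (A != set0 /\ is_clique A) /\
    (forall i, B i != set0 /\ is_clique (B i)) /\
    (forall i, C i != set0 /\ is_clique (C i)) /\
    is_clique F /\
    (forall i j, i != j -> anticomplete (B i) (B j)) /\
    (forall i j, i != j -> complete (C i) (C j)) /\
    (exists istar : 'I_3,
       (forall i, i != istar -> complete A (B i)) /\
       exists s : seq T,
         [/\ uniq s, (forall x, (x \in s) = (x \in A)),
             pairwise (fun a b => nbhd b :&: B istar \subset nbhd a :&: B istar) s &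
             (if s is a1 :: _ then nbhd a1 :&: B istar = B istar else False)]) /\
    (forall i, anticomplete A (C i)) /\
    (forall i, complete (B i) (C i)) /\
    (forall i j, i != j -> anticomplete (B i) (C j)) /\
    (exists jstar : 'I_3,
       complete F (~: (B jstar :|: C jstar :|: F)) /\
       anticomplete F (B jstar :|: C jstar)).
End Basket.

(* Label every vertex of a 5-basket by the part of the partition containing it.  Except for the
   pairs in A x B_{i*}, the adjacency of two distinct vertices depends only on their parts, and
   between A and B_{i*} the neighbourhoods are nested, so those edges contain no induced 2K_2.
   An induced copy of a small graph H therefore labels V(H) consistently with these constraints;
   an exhaustive search, for each of the nine choices of i* and j*, finds no such labeling when
   H is 2P_3, C_4, C_6, C_7 or T_0.  For the positive statements pick one vertex in each nonempty
   part, in A one complete to B_{i*}: these representatives induce a 3-pentagon, they are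
   connected in the complement, and every vertex has a non-neighbour and two non-adjacent
   neighbours among them. *)

From HB Require Import structures.
From mathcomp Require Import all_boot zmodp zify.
Set Implicit Arguments. Unset Strict Implicit. Unset Printing Implicit Defensive.

Inductive part := PA | PB of 'I_3 | PC of 'I_3 | PF.

(* Closed ordinals rather than [inord 1], [inord 2], which [vm_compute] cannot evaluate
   ([inord] goes through the opaque [idP]). *)
Definition o1 : 'I_3 := @Ordinal 3 1 isT.
Definition o2 : 'I_3 := @Ordinal 3 2 isT.

Lemma ord3P (i : 'I_3) : [\/ i = ord0, i = o1 | i = o2].
Proof.
by case: i => [[|[|[|//]]] p]; [constructor 1 | constructor 2 | constructor 3]; apply: val_inj.
Qed.

Definition parts := [:: PA; PB ord0; PB o1; PB o2; PC ord0; PC o1; PC o2; PF].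

Definition eq_part (x y : part) :=
  match x, y with
  | PA, PA | PF, PF => true
  | PB i, PB j | PC i, PC j => i == j
  | _, _ => false
  end.

Lemma eq_partP : Equality.axiom eq_part.
Proof.
by case=> [|i|i|] [|j|j|] /=; try (by constructor); apply: (iffP eqP) => [-> | []].
Qed.

HB.instance Definition _ := hasDecEq.Build part eq_partP.

Lemma mem_parts x : x \in parts.
Proof. by case: x => [|i|i|] //; case: (ord3P i) => ->. Qed.

Lemma all_partsP (P : pred part) : reflect (forall x, P x) (all P parts).
Proof.
by apply: (iffP allP) => [P_parts x | P_all x _]; [apply: P_parts; apply: mem_parts | apply: P_all].
Qed.

Lemma has_partsP (P : pred part) : reflect (exists x, P x) (has P parts).
Proof. by apply: (iffP hasP) => [[x _ Px] | [x Px]]; exists x => //; apply: mem_parts. Qed.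

(* Adjacency of two distinct vertices in the given parts of a 5-basket with j* = js; it is exact
   except on the pairs (A, B_{i*}), see [free_pair]. *)
Definition basket_adj (js : 'I_3) (x y : part) : bool :=
  match x, y with
  | PA, PC _ | PC _, PA => false
  | PB i, PB j | PB i, PC j | PC i, PB j => i == j
  | PB i, PF | PF, PB i | PC i, PF | PF, PC i => i != js
  | _, _ => true
  end.

Lemma basket_adj_sym js : symmetric (basket_adj js).
Proof. by case=> [|i|i|] [|j|j|] //=; rewrite eq_sym. Qed.

Lemma basket_adj_refl js : reflexive (basket_adj js).
Proof. by case=> //= i; rewrite eqxx. Qed.

Definition AB_pair (ist : 'I_3) (x y : part) :=
  if (x, y) is (PA, PB j) then j == ist else false.

Lemma AB_pairP ist x y : reflect (x = PA /\ y = PB ist) (AB_pair ist x y).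
Proof.
by case: x y => [|i|i|] [|j|j|] /=; try (by constructor => -[]);
  apply: (iffP eqP) => [-> | [_ []]].
Qed.

Definition free_pair ist x y := AB_pair ist x y || AB_pair ist y x.

Lemma free_pair_sym ist : symmetric (free_pair ist).
Proof. by move=> x y; rewrite /free_pair orbC. Qed.

Section Labelings.
Variables (ist js : 'I_3) (h : rel nat).

(* No induced 2K_2 between A and B_{i*} on the quadruple (i, j, i', j'). *)
Definition chain_quad (L : nat -> part) i j i' j' :=
  [==> AB_pair ist (L i) (L j), AB_pair ist (L i') (L j'), h i j, h i' j' => h i j' || h i' j].

Definition fits_new (l : seq part) (x : part) : bool :=
  all (fun i => free_pair ist (nth PA l i) x || (h i (size l) == basket_adj js (nth PA l i) x))
      (iota 0 (size l)).

Definition chain_ok (l : seq part) : bool :=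
  let I := iota 0 (size l) in
  all (fun i => all (fun j => all (fun i' => all (chain_quad (nth PA l) i j i') I) I) I) I.

(* An [if] rather than [&&]: the VM evaluates both arguments of [andb], which would disable the
   pruning. *)
Fixpoint extendable (n : nat) (l : seq part) : bool :=
  if n is n'.+1 then
    has (fun x => if fits_new l x then extendable n' (rcons l x) else false) parts
  else chain_ok l.

Lemma extendable_mkseq (L : nat -> part) k :
    (forall i j, i < j < k ->
       free_pair ist (L i) (L j) || (h i j == basket_adj js (L i) (L j))) ->
    (forall i j i' j', i < k -> j < k -> i' < k -> j' < k -> chain_quad L i j i' j') ->
  extendable k [::].
Proof.
move=> L_fits L_chain.
suff ext_mkseq n m : m + n = k -> extendable n (mkseq L m) by apply: (ext_mkseq k 0).
elim: n m => [|n IHn] m.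
  rewrite addn0 => ->; rewrite /= /chain_ok size_mkseq.
  apply/allP => i; rewrite mem_iota => /andP[_ ik]; apply/allP => j.
  rewrite mem_iota => /andP[_ jk]; apply/allP => i'; rewrite mem_iota => /andP[_ i'k].
  apply/allP => j'; rewrite mem_iota => /andP[_ j'k].
  by rewrite /chain_quad !nth_mkseq //; apply: L_chain.
move=> mnk; apply/has_partsP; exists (L m).
have -> : fits_new (mkseq L m) (L m).
  apply/allP => i; rewrite size_mkseq mem_iota => /andP[_ im].
  by rewrite nth_mkseq //; apply: L_fits; rewrite im /=; lia.
by rewrite -mkseqS; apply: IHn; rewrite addSnnS.
Qed.

End Labelings.

Definition labelable ist js k (f : rel 'I_k.+1) :=
  extendable ist js (fun i j => f (inZp i) (inZp j)) k.+1 [::].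

(* A conjunction rather than a boolean: rewriting inside a boolean combination of [labelable]
   terms makes the unifier unfold the search. *)
Lemma forbidden_not_labelable ist js :
  [/\ ~~ labelable ist js twoP3, ~~ labelable ist js (cycle_rel 4),
      ~~ labelable ist js (cycle_rel 6), ~~ labelable ist js (cycle_rel 7)
    & ~~ labelable ist js T0].
Proof. by case: (ord3P ist) => ->; case: (ord3P js) => ->; split; vm_compute. Qed.

Lemma pattern_nonneighbour ist js x :
  has (fun y => [&& y != PF, x != y, ~~ AB_pair ist x y & ~~ basket_adj js x y]) parts.
Proof. by move: x; apply/all_partsP; case: (ord3P ist) => ->; case: (ord3P js) => ->. Qed.

Lemma pattern_nonclique_nbhd ist js x :
  has (fun y => has (fun z =>
    [&& [&& y != PF, z != PF, x != y, x != z & y != z],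
        ~~ AB_pair ist x y, ~~ AB_pair ist x z &
        [&& basket_adj js x y, basket_adj js x z & ~~ basket_adj js y z]]) parts) parts.
Proof. by move: x; apply/all_partsP; case: (ord3P ist) => ->; case: (ord3P js) => ->. Qed.

Definition pentagon_part (i : 'I_7) : part :=
  nth PA [:: PA; PB ord0; PB o1; PB o2; PC ord0; PC o1; PC o2] i.

Lemma pentagon_part_inj : injective pentagon_part.
Proof.
by case=> [[|[|[|[|[|[|[|//]]]]]]] p] [[|[|[|[|[|[|[|//]]]]]]] q] //= _; apply: val_inj.
Qed.

Lemma pentagon_part_neq_PF i : pentagon_part i != PF.
Proof. by case: i => [[|[|[|[|[|[|[|//]]]]]]] p]. Qed.

Lemma pentagon3_pattern js i j :
  pentagon3 i j = (i != j) && basket_adj js (pentagon_part i) (pentagon_part j).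
Proof. by case: i j => [[|[|[|[|[|[|[|//]]]]]]] p] [[|[|[|[|[|[|[|//]]]]]]] q]. Qed.

Definition co_pattern js : rel part :=
  fun x y => [&& x != PF, y != PF & ~~ basket_adj js x y].

Definition co_route (x : part) : seq part :=
  match x with
  | PA => [:: PC ord0; PB o1; PB ord0]
  | PB i => if i == ord0 then [::] else [:: PB ord0]
  | PC i => if i == ord0 then [:: PB o1; PB ord0] else [:: PB ord0]
  | PF => [::]
  end.

Lemma co_routeP js x :
  x != PF -> path (co_pattern js) x (co_route x) && (last x (co_route x) == PB ord0).
Proof. by case: x => [|i|i|] //; case: (ord3P i) => ->. Qed.

Record basket_labeling (T : finType) (e : rel T) (ist js : 'I_3)
    (lab : T -> part) (rep : part -> T) : Prop := BasketLabeling {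
  lab_adj : forall u v, u != v -> ~~ free_pair ist (lab u) (lab v) ->
    e u v = basket_adj js (lab u) (lab v);
  lab_chain : forall a a' b b',
    AB_pair ist (lab a) (lab b) -> AB_pair ist (lab a') (lab b') ->
    e a b -> e a' b' -> e a b' || e a' b;
  lab_rep : forall x, x != PF -> lab (rep x) = x;
  rep_A_B : forall b, lab b = PB ist -> e (rep PA) b
}.

Section BasketLabeling.
Variables (T : finType) (e : rel T) (ist js : 'I_3) (lab : T -> part) (rep : part -> T).
Hypotheses (e_sym : symmetric e) (e_irr : irreflexive e).
Hypothesis labP : basket_labeling e ist js lab rep.

Let co u v := (u != v) && ~~ e u v.

Lemma neq_lab u v : lab u != lab v -> u != v.
Proof. by apply: contraNneq => ->. Qed.

Lemma e_rep v y : y != PF -> lab v != y -> ~~ AB_pair ist (lab v) y ->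
  e v (rep y) = basket_adj js (lab v) y.
Proof.
move=> yF vy vyA; have rep_y := lab_rep labP yF.
have [/orP[vyA' | /AB_pairP[yA vB]] | nfree] := boolP (free_pair ist (lab v) y).
- by rewrite vyA' in vyA.
- by rewrite e_sym yA (rep_A_B labP vB) vB.
- by rewrite (lab_adj labP) ?rep_y // neq_lab ?rep_y.
Qed.

Lemma rep_adj x y :
  x != PF -> y != PF -> x != y -> e (rep x) (rep y) = basket_adj js x y.
Proof.
move=> xF yF xy; have [/AB_pairP[-> ->] | nAB] := boolP (AB_pair ist x y).
  by rewrite (rep_A_B labP) // (lab_rep labP).
by rewrite e_rep ?(lab_rep labP).
Qed.

Lemma labelable_of_induced k (f : rel 'I_k.+1) : has_induced e f -> labelable ist js f.
Proof.
move=> [phi [phi_inj f_phi]].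
pose L i := lab (phi (inZp i)).
apply: (@extendable_mkseq _ _ _ L) => [i j /andP[ij jk] | i j i' j' *].
  have [// | nfree] /= := boolP (free_pair ist (L i) (L j)).
  rewrite f_phi (lab_adj labP) //; apply/eqP => /phi_inj /(congr1 val) /=.
  rewrite !modn_small //; lia.
rewrite /chain_quad !f_phi; apply/implyP => ab; apply/implyP => ab'; apply/implyP => eab.
by apply/implyP; apply: (lab_chain labP ab ab' eab).
Qed.

Lemma induced_pentagon3 : has_induced e pentagon3.
Proof.
exists (rep \o pentagon_part); split => [i j /= /(congr1 lab) | i j /=].
  by rewrite !(lab_rep labP) ?pentagon_part_neq_PF // => /pentagon_part_inj.
rewrite (pentagon3_pattern js); have [-> | ij] := eqVneq i j; first by rewrite e_irr.
by rewrite rep_adj ?pentagon_part_neq_PF // (inj_eq pentagon_part_inj).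
Qed.

Lemma co_rep v y : y != PF -> lab v != y -> ~~ AB_pair ist (lab v) y ->
  ~~ basket_adj js (lab v) y -> co v (rep y).
Proof.
move=> yF vy vyA nadj; rewrite /co e_rep // nadj andbT.
by rewrite neq_lab // (lab_rep labP).
Qed.

Lemma exists_co v : exists2 y, y != PF & co v (rep y).
Proof.
have /has_partsP[y /and4P[yF vy vyA nadj]] := pattern_nonneighbour ist js (lab v).
by exists y; last exact: co_rep.
Qed.

Lemma co_connect_rep x : x != PF -> connect co (rep x) (rep (PB ord0)).
Proof.
move=> /(co_routeP js) /andP[route_path /eqP route_end].
apply/connectP; exists (map rep (co_route x)); last by rewrite last_map route_end.
apply: homo_path route_path => y z /and3P[yF zF nadj].
have yz : y != z by apply: contraNneq nadj => ->; rewrite basket_adj_refl.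
by rewrite /co rep_adj // nadj andbT neq_lab // !(lab_rep labP).
Qed.

Lemma anticonnected_of_labeling : anticonnected e.
Proof.
have co_sym : connect_sym co.
  by apply: sym_connect_sym => u v; rewrite /co eq_sym e_sym.
have to_hub v : connect co v (rep (PB ord0)).
  have [y yF co_vy] := exists_co v.
  exact: connect_trans (connect1 co_vy) (co_connect_rep yF).
by move=> u v; rewrite (connect_trans (to_hub u)) // co_sym to_hub.
Qed.

Lemma not_simplicial v : ~ simplicial e v.
Proof.
have /has_partsP[y /has_partsP[z]] := pattern_nonclique_nbhd ist js (lab v).
case/and4P => /and5P[yF zF vy vz yz] vyA vzA /and3P[vy_adj vz_adj yz_nadj] clique.
have := clique (rep y) (rep z).
rewrite /nbhd !inE (e_rep yF) // (e_rep zF) // vy_adj vz_adj.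
by rewrite rep_adj // (negbTE yz_nadj) neq_lab ?(lab_rep labP) // => /(_ isT isT isT).
Qed.

Lemma not_universal v : ~ universal e v.
Proof.
have [y yF /andP[v_rep nadj]] := exists_co v.
by move=> /(_ (rep y)); rewrite eq_sym v_rep => /(_ isT); apply/negP.
Qed.

End BasketLabeling.

Section FiveBasketLabeling.
Variables (T : finType) (e : rel T) (A F : {set T}) (B C : 'I_3 -> {set T}).
Variables (ist js : 'I_3) (a1 : T).

Definition part_set x := match x with PA => A | PB i => B i | PC i => C i | PF => F end.

Hypothesis e_sym : symmetric e.
Hypothesis part_set_partition : forall v, count (fun x => v \in part_set x) parts = 1.
Hypotheses (A_clique : is_clique e A) (F_clique : is_clique e F).
Hypotheses (B_clique : forall i, is_clique e (B i)) (C_clique : forall i, is_clique e (C i)).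
Hypotheses (B_nonempty : forall i, B i != set0) (C_nonempty : forall i, C i != set0).
Hypothesis B_B : forall i j, i != j -> anticomplete e (B i) (B j).
Hypothesis C_C : forall i j, i != j -> complete e (C i) (C j).
Hypothesis A_B : forall i, i != ist -> complete e A (B i).
Hypothesis A_C : forall i, anticomplete e A (C i).
Hypothesis B_C : forall i, complete e (B i) (C i).
Hypothesis B_C' : forall i j, i != j -> anticomplete e (B i) (C j).
Hypothesis F_compl : complete e F (~: (B js :|: C js :|: F)).
Hypothesis F_anti : anticomplete e F (B js :|: C js).
Hypotheses (a1_A : a1 \in A) (a1_B : B ist \subset nbhd e a1).
Hypothesis A_nested : {in A &, forall a a',
  (nbhd e a :&: B ist \subset nbhd e a' :&: B ist) \/
  (nbhd e a' :&: B ist \subset nbhd e a :&: B ist)}.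

Definition part_of v := head PF [seq x <- parts | v \in part_set x].

(* [a1], the first vertex of the ordering of A, is complete to B_{i*}. *)
Definition part_rep x := if x == PA then a1 else odflt a1 [pick v in part_set x].

Lemma mem_part_set v x : (v \in part_set x) = (part_of v == x).
Proof.
have := part_set_partition v; rewrite -size_filter /part_of.
case: [seq y <- parts | _] (mem_filter (fun y => v \in part_set y) x parts) => [|y []] //=.
by rewrite mem_parts andbT inE eq_sym => <-.
Qed.

Lemma mem_A v : (v \in A) = (part_of v == PA). Proof. exact: mem_part_set v PA. Qed.
Lemma mem_B v i : (v \in B i) = (part_of v == PB i). Proof. exact: mem_part_set v (PB i). Qed.
Lemma mem_C v i : (v \in C i) = (part_of v == PC i). Proof. exact: mem_part_set v (PC i). Qed.
Lemma mem_F v : (v \in F) = (part_of v == PF). Proof. exact: mem_part_set v PF. Qed.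

Lemma part_ofP v : v \in part_set (part_of v).
Proof. by rewrite mem_part_set. Qed.

Lemma part_of_rep x : x != PF -> part_of (part_rep x) = x.
Proof.
move=> xF; apply/eqP; rewrite -mem_part_set /part_rep.
case: eqP => [-> // | _]; case: pickP => // none.
by case: x xF none => [|i|i|] //= _ none;
  [case/set0Pn: (B_nonempty i) | case/set0Pn: (C_nonempty i)] => v; rewrite none.
Qed.

Lemma F_adj u v : u \in F -> part_of v != PF -> e u v = basket_adj js PF (part_of v).
Proof.
move=> uF vF; have [vjs | vnjs] := boolP (v \in B js :|: C js).
  rewrite (negbTE (F_anti uF vjs)); move: vjs.
  by rewrite inE mem_B mem_C => /orP[] /eqP -> /=; rewrite eqxx.
rewrite (F_compl uF); last by rewrite in_setC in_setU negb_or vnjs mem_F.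
move: vnjs; rewrite inE mem_B mem_C; case: (part_of v) vF => [|i|i|] //= _.
all: by rewrite /eq_op /= ?orbF => ->.
Qed.

Definition part_rank x := match x with PA => 0 | PB _ => 1 | PC _ => 2 | PF => 3 end.

Lemma part_of_adj u v : u != v -> ~~ free_pair ist (part_of u) (part_of v) ->
  e u v = basket_adj js (part_of u) (part_of v).
Proof.
wlog le_uv : u v / part_rank (part_of u) <= part_rank (part_of v).
  move=> wlog_uv uv nfree.
  have [le | /ltnW le] := leqP (part_rank (part_of u)) (part_rank (part_of v)).
    exact: wlog_uv.
  by rewrite e_sym basket_adj_sym wlog_uv // 1?eq_sym // free_pair_sym.
move=> uv nfree; have := part_ofP u; have := part_ofP v.
case Ev: (part_of v) le_uv nfree => [|j|j|];
  case Eu: (part_of u) => [|i|i|] //= _ nfree hv hu.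
all: try by rewrite e_sym F_adj ?Eu.
- exact: (A_clique hu hv uv).
- have j_ist : j != ist by move: nfree; rewrite /free_pair /= orbF.
  exact: (A_B j_ist hu hv).
- case: (eqVneq i j) hv => [<- | ij] hv;
    [exact: (B_clique hu hv uv) | exact/negbTE/(B_B ij hu hv)].
- exact/negbTE/(A_C hu hv).
- case: (eqVneq i j) hv => [<- | ij] hv; [exact: (B_C hu hv) | exact/negbTE/(B_C' ij hu hv)].
- case: (eqVneq i j) hv => [<- | ij] hv;
    [exact: (C_clique hu hv uv) | exact: (C_C ij hu hv)].
- exact: (F_clique hu hv uv).
Qed.

Lemma part_of_chain a a' b b' :
  AB_pair ist (part_of a) (part_of b) -> AB_pair ist (part_of a') (part_of b') ->
  e a b -> e a' b' -> e a b' || e a' b.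
Proof.
move=> /AB_pairP[aA bB] /AB_pairP[a'A b'B] eab ea'b'.
have inA x : part_of x = PA -> x \in A by rewrite mem_A => ->.
have inB x : part_of x = PB ist -> x \in B ist by rewrite mem_B => ->.
have [sub | sub] := A_nested (inA a aA) (inA a' a'A).
  have := subsetP sub b; rewrite /nbhd !inE eab inB //.
  by move=> /(_ isT) /andP[-> _]; rewrite orbT.
by have := subsetP sub b'; rewrite /nbhd !inE ea'b' inB // => /(_ isT) /andP[-> _].
Qed.

Lemma part_rep_A_B b : part_of b = PB ist -> e (part_rep PA) b.
Proof. by move=> /eqP; rewrite -mem_B => /(subsetP a1_B); rewrite /nbhd inE. Qed.

Lemma part_of_labeling : basket_labeling e ist js part_of part_rep.
Proof.
by split; [exact: part_of_adj | exact: part_of_chain | exact: part_of_rep | exact: part_rep_A_B].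
Qed.

End FiveBasketLabeling.

Lemma pairwise_mem_total (X : eqType) (r : rel X) (s : seq X) x y :
  pairwise r s -> x \in s -> y \in s -> [\/ x = y, r x y | r y x].
Proof.
elim: s => // z s IHs; rewrite pairwise_cons => /andP[/allP r_z r_s].
rewrite !inE => /predU1P[-> | xs] /predU1P[-> | ys]; first by constructor 1.
- by constructor 2; apply: r_z.
- by constructor 3; apply: r_z.
- exact: IHs.
Qed.

Lemma five_basket_labeling (T : finType) (e : rel T) :
  symmetric e -> five_basket e -> exists ist js lab rep, basket_labeling e ist js lab rep.
Proof.
move=> e_sym [A [B [C [F [partition [[_ A_clique] [B_ok [C_ok [F_clique [B_B [C_C
  [[ist [A_B [s [_ s_A s_nested s_head]]]] [A_C [B_C [B_C' [js [F_compl F_anti]]]]]]]]]]]]]]]]].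
case: s s_A s_nested s_head => [// | a1 s] s_A s_nested s_head.
exists ist, js, (part_of A F B C), (part_rep A F B C a1).
have o1E : inord 1 = o1 by apply: val_inj; rewrite /= inordK.
have o2E : inord 2 = o2 by apply: val_inj; rewrite /= inordK.
apply: part_of_labeling => //.
- by move=> v; rewrite -(partition v) o1E o2E.
- by move=> i; case: (B_ok i).
- by move=> i; case: (C_ok i).
- by move=> i; case: (B_ok i).
- by move=> i; case: (C_ok i).
- by rewrite -s_A inE eqxx.
- by rewrite -s_head subsetIl.
move=> a a'; rewrite -!s_A => as_ a's.
by case: (pairwise_mem_total s_nested as_ a's) => [-> | ? | ?]; [left | right | left].
Qed.

Theorem proposition5p2 (T : finType) (e : rel T) :
  simple_graph e -> five_basket e ->
  (~ has_induced e twoP3 /\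
   ~ has_induced e (cycle_rel 4) /\
   ~ has_induced e (cycle_rel 6) /\
   ~ has_induced e (cycle_rel 7) /\
   ~ has_induced e T0) /\
  has_induced e pentagon3 /\
  anticonnected e /\
  (forall v, ~ simplicial e v) /\
  (forall v, ~ universal e v).
Proof.
move=> [e_sym e_irr] /(five_basket_labeling e_sym) [ist [js [lab [rep labP]]]].
have not_induced k (f : rel 'I_k.+1) : ~~ labelable ist js f -> ~ has_induced e f.
  by move=> /negP not_lab /(labelable_of_induced labP).
have [no2P3 noC4 noC6 noC7 noT0] := forbidden_not_labelable ist js.
split; first by split; [|split; [|split; [|split]]]; apply: not_induced;
  [exact: no2P3 | exact: noC4 | exact: noC6 | exact: noC7 | exact: noT0].
split; first exact: induced_pentagon3 e_sym e_irr labP.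
split; first exact: anticonnected_of_labeling e_sym labP.
by split; [exact: not_simplicial e_sym labP | exact: not_universal e_sym labP].
Qed.
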